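(* Let $\phi\in C^3((0,\infty))$, $\eta=\phi'$ and $\hat\eta(r)=\eta(r)+2\eta(2r)$, and suppose there are constants $0<a_0<\tilde r_1<\tilde r_2<2a_0$ and $a_1>a_0$ such that: $\eta'(r)>0$ for $0<r<\tilde r_1$ and $\eta'(r)<0$ for $r>\tilde r_1$; $\eta''(r)<0$ for $0<r<\tilde r_2$ and $\eta''(r)>0$ for $r>\tilde r_2$; $\hat\eta(r)<0$ for $0<r<a_0$ and $\hat\eta(r)>0$ for $r>a_0$; $\hat\eta'(r)>0$ for $0<r<a_1$ and $\hat\eta'(r)<0$ for $r>a_1$. Let $N,K$ be positive integers with $K<N-1$, and let $\hat{\mathbf\Psi}^F:(0,\infty)^{2N+1}\to\mathbb R^{2N+1}$, $\mathbf r=(r_{-N},\dots,r_N)\mapsto(\hat\psi^F_{-N}(\mathbf r),\dots,\hat\psi^F_N(\mathbf r))$, be defined by $\hat\psi^F_j(\mathbf r)=\eta(r_j)+2\eta(2r_j)$ for $-N\le j\le -K$ and for $K\le j\le N$, and $\hat\psi^F_j(\mathbf r)=\eta(r_j)+\eta(r_j+r_{j-1})+\eta(r_j+r_{j+1})+[2\eta(2r_K)-\eta(r_K+r_{K-1})-\eta(r_K+r_{K+1})]$ for $-K+1\le j\le K-1$. Let $\mathbf a_0=(a_0,\dots,a_0)\in\mathbb R^{2N+1}$. If $\eta'(a_0)+8\eta'(2a_0)>0$, then $\hat{\mathbf\Psi}^F$ is bijective in a neighborhood of $\mathbf a_0$, i.e. there is an open neighborhood $U$ of $\mathbf a_0$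 such that $\hat{\mathbf\Psi}^F$ maps $U$ bijectively onto an open neighborhood of $\hat{\mathbf\Psi}^F(\mathbf a_0)$.
   Context: This map $\hat{\mathbf\Psi}^F$ is the (symmetrized) internal conjugate force of the force-based quasicontinuum approximation of a one-dimensional atomic chain with nearest and next-nearest neighbour pair interactions given by the potential $\phi$; indices $-K+1,\dots,K-1$ form the atomistic region and the others the continuum region. *)

From HB Require Import structures.
From mathcomp Require Import all_boot all_order all_algebra.
From mathcomp Require Import all_classical all_reals all_analysis.
Set Implicit Arguments. Unset Strict Implicit. Unset Printing Implicit Defensive.
Import Order.TTheory GRing.Theory Num.Theory.
Import numFieldNormedType.Exports.
Local Open Scope classical_set_scope.
Local Open Scope ring_scope.

Definition C3_pos (R : realType) (phi : R -> R) : Prop :=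
  forall x : R, 0 < x ->
    [/\ derivable phi x 1, derivable (derive1 phi) x 1, derivable (derive1 (derive1 phi)) x 1
      & {for x, continuous (derive1 (derive1 (derive1 phi)))}].

Definition hat_eta (R : realType) (eta : R -> R) (r : R) : R :=
  eta r + 2 * eta (2 * r).

(* Vectors (r_{-N},...,r_N) are
   rows of length 2N+1; entry at position k : 'I_(2N+1) is r_{k-N}.
   Atomistic indices -K+1 <= j <= K-1 correspond to N-K < k < N+K. *)
Definition psiF (R : realType) (eta : R -> R) (N K : nat)
  (r : 'rV[R]_(N.*2.+1)) : 'rV[R]_(N.*2.+1) :=
  let x (k : nat) := r 0 (inord k) in
  \row_(i < N.*2.+1)
    if ((N - K < i) && (i < N + K))%N then
      eta (x i) + eta (x i + x i.-1) + eta (x i + x i.+1)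
      + (2 * eta (2 * x (N + K)%N) - eta (x (N + K)%N + x (N + K).-1)
         - eta (x (N + K)%N + x (N + K).+1))
    else eta (x i) + 2 * eta (2 * x i).

(* Write e1 = eta'(a0) and e2 = eta'(2 a0); since 2 a0 > r1, e2 <= 0.  At the
   uniform state the Jacobian of the force map is strictly diagonally dominant:
   an atomistic row has diagonal entry e1 + 2 e2 and off-diagonal mass 6 |e2|,
   a continuum row is diagonal with entry e1 + 4 e2, and e1 + 8 e2 > 0 is exactly
   dominance of the atomistic rows.  By continuity of eta'' the linearisation
   errors of eta near a0 and 2 a0 are as small as we like, so on a small max-norm
   ball the chord map x |-> x - L^-1 (Psi x - y), L the Jacobian diagonal, is a
   contraction; the Banach fixed-point theorem gives injectivity and an open
   image. *)

Set Warnings "-notation-overridden,-ambiguous-paths,-notation-incompatible-prefix,-redundant-canonical-projection".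
From HB Require Import structures.
From mathcomp Require Import all_boot all_order all_algebra.
From mathcomp Require Import all_classical all_reals all_analysis.
From mathcomp Require Import ring lra.
Import Order.TTheory GRing.Theory Num.Theory.
Import numFieldNormedType.Exports.
Local Open Scope classical_set_scope.
Local Open Scope ring_scope.

(* The library makes matrices complete and normed separately but does not declare
   the joint structure that [banach_fixed_point] needs. *)
HB.instance Definition _ (R : realType) (m n : nat) := Complete.on 'M[R]_(m, n).

Section RowVectorNorm.
Context {R : realType} {n : nat}.
Implicit Types (x : 'rV[R]_n) (c : R).

Lemma rV_entry_norm_le x i : `|x 0 i| <= `|x|.
Proof.
rewrite [leRHS]/Num.Def.normr /= mx_normrE; apply/bigmax_geP; right => /=.
by exists (0, i).
Qed.

Lemma rV_norm_le x c : 0 <= c -> (forall i, `|x 0 i| <= c) -> `|x| <= c.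
Proof.
move=> c_ge0 xc; rewrite [leLHS]/Num.Def.normr /= mx_normrE.
by apply: bigmax_le => // -[i j] _ /=; rewrite (ord1 i).
Qed.

End RowVectorNorm.

Section NearDiagonalInverse.
Context {R : realType} {n : nat} {F : 'rV[R]_n -> 'rV[R]_n} {a : 'rV[R]_n}.
Context {lam : 'I_n -> R} {lmin lmax d q : R}.
Hypotheses (d_gt0 : 0 < d) (q_ge0 : 0 <= q) (q_lt1 : q < 1).
Hypotheses (lmin_gt0 : 0 < lmin) (lmin_le_lmax : lmin <= lmax).
Hypothesis lam_bounds : forall i, lmin <= lam i <= lmax.
Hypothesis F_near_diag : forall {x y}, `|x - a| <= d -> `|y - a| <= d ->
  forall i, `|lam i * (x 0 i - y 0 i) - (F x 0 i - F y 0 i)| <= q * lam i * `|x - y|.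

Let lam_gt0 i : 0 < lam i.
Proof. by case/andP: (lam_bounds i) => lo _; apply: lt_le_trans lo. Qed.

Let lmax_gt0 : 0 < lmax.
Proof. exact: lt_le_trans lmin_gt0 lmin_le_lmax. Qed.

Let ball_le {z} : ball a d z -> `|z - a| <= d.
Proof. by rewrite -ball_normE /= distrC => /ltW. Qed.

Lemma near_diag_lipschitz {x y} : `|x - a| <= d -> `|y - a| <= d ->
  `|F x - F y| <= (1 + q) * lmax * `|x - y|.
Proof.
move=> xa ya; apply: rV_norm_le => [|i].
  by rewrite !mulr_ge0 ?addr_ge0 // ltW.
have := F_near_diag xa ya i; have := rV_entry_norm_le (x - y) i; rewrite !mxE.
set u := x 0 i - y 0 i; set w := F x 0 i - F y 0 i => u_le near_w.
have [_ lam_le] := andP (lam_bounds i).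
have lam_u : `|lam i * u| <= lam i * `|x - y|.
  by rewrite normrM gtr0_norm // ler_wpM2l // ltW.
have w_le : `|w| <= `|lam i * u| + `|lam i * u - w|.
  by apply: le_trans (ler_normB _ _); rewrite opprB addrC subrK.
have : 0 <= (lmax - lam i) * ((1 + q) * `|x - y|).
  by rewrite mulr_ge0 ?subr_ge0 ?mulr_ge0 ?addr_ge0.
lra.
Qed.

Lemma near_diag_continuous x : ball a d x -> {for x, continuous F}.
Proof.
move=> xa; apply/(@cvgrPdist_le _ _ _ (nbhs x) (nbhs_filter x)) => e e_gt0.
have L_gt0 : 0 < (1 + q) * lmax by rewrite mulr_gt0 ?ltr_pwDl.
have x_ball : \forall z \near x, ball a d z.
  by apply: open_nbhs_nbhs; split => //; exact: ball_open.
near=> z; have za : ball a d z by near: z.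
apply: le_trans (near_diag_lipschitz (ball_le xa) (ball_le za)) _.
rewrite -ler_pdivlMl //; near: z; apply: cvgr_dist_le => //.
by rewrite mulr_gt0 ?invr_gt0.
Unshelve. all: by end_near. Qed.

Lemma near_diag_step {x y} : `|x - a| <= d -> `|y - a| <= d -> forall i,
  `|(x 0 i - y 0 i) - (F x 0 i - F y 0 i) / lam i| <= q * `|x - y|.
Proof.
move=> xa ya i; have lam0 := lam_gt0 i.
rewrite -(ler_pM2l lam0) -{1}(gtr0_norm lam0) -normrM mulrBr mulrCA divff ?gt_eqF //.
by rewrite mulr1 mulrA [lam i * q]mulrC F_near_diag.
Qed.

Lemma near_diag_inj x y : `|x - a| <= d -> `|y - a| <= d -> F x = F y -> x = y.
Proof.
move=> xa ya Fxy; apply/eqP; rewrite -subr_eq0 -normr_eq0 eq_le normr_ge0 andbT.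
have : `|x - y| <= q * `|x - y|.
  apply: rV_norm_le => [|i]; first by rewrite mulr_ge0.
  by have := near_diag_step xa ya i; rewrite Fxy subrr mul0r subr0 !mxE.
have := normr_ge0 (x - y); move: q_lt1; nra.
Qed.

Definition chord_step (y x : 'rV[R]_n) : 'rV[R]_n :=
  x - \row_i ((F x 0 i - y 0 i) / lam i).

Lemma chord_step_diff y u v i : (chord_step y u - chord_step y v) 0 i =
  (u 0 i - v 0 i) - (F u 0 i - F v 0 i) / lam i.
Proof. by rewrite !mxE; field; rewrite gt_eqF. Qed.

Lemma chord_step_fixed y x : chord_step y x = x -> F x = y.
Proof.
move=> fix_x; apply/rowP => i; have := congr1 (fun M : 'rV[R]_n => M 0 i) fix_x.
rewrite /chord_step !mxE => /eqP.
rewrite -subr_eq0 addrAC subrr add0r oppr_eq0 mulf_eq0 invr_eq0.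
by rewrite (gt_eqF (lam_gt0 i)) orbF subr_eq0 => /eqP.
Qed.

Let eps := (1 - q) * lmin * d / 2.

Lemma chord_step_maps_ball y x : `|F a - y| < eps ->
  `|x - a| <= d / 2 -> `|chord_step y x - a| <= d / 2.
Proof.
move=> Fay xa; have half_le : d / 2 <= d by move: d_gt0; lra.
apply: rV_norm_le => [|i]; first by move: d_gt0; lra.
have lam0 := lam_gt0 i; have [lo _] := andP (lam_bounds i).
have -> : (chord_step y x - a) 0 i =
    (chord_step y x - chord_step y a) 0 i - (F a 0 i - y 0 i) / lam i.
  by rewrite !mxE; field; rewrite gt_eqF.
rewrite chord_step_diff; apply: le_trans (ler_normB _ _) _.
have a_near : `|a - a| <= d by rewrite subrr normr0 ltW.
have step := near_diag_step (le_trans xa half_le) a_near i.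
have qx : q * `|x - a| <= q * (d / 2) by rewrite ler_wpM2l.
have Fa_i : `|(F a 0 i - y 0 i) / lam i| <= (1 - q) * (d / 2).
  rewrite normrM normfV (gtr0_norm lam0) ler_pdivrMr //.
  have := rV_entry_norm_le (F a - y) i; rewrite !mxE => Fa_le.
  have : 0 <= (1 - q) * (d / 2) * (lam i - lmin).
    by rewrite !mulr_ge0 ?subr_ge0 // ?ltW //; move: q_lt1 d_gt0; lra.
  move: Fay; rewrite /eps; lra.
lra.
Qed.

Lemma near_diag_image_ball y : `|F a - y| < eps ->
  exists2 x, `|x - a| <= d / 2 & F x = y.
Proof.
move=> Fay; pose B := closed_ball_ Num.Def.normr a (d / 2).
have B_half x : B x -> `|x - a| <= d / 2 by rewrite /B /closed_ball_ /= distrC.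
have B_le x : B x -> `|x - a| <= d.
  by move/B_half/le_trans; apply; move: d_gt0; lra.
have Ba : B a by rewrite /B /closed_ball_ /= subrr normr0; move: d_gt0; lra.
have chord_B : {homo chord_step y : x / B x >-> B x}.
  move=> x /B_half xa; rewrite /B /closed_ball_ /= distrC.
  exact: chord_step_maps_ball.
have [g gE] := Pfun chord_B.
have g_contraction : is_contraction g.
  exists (NngNum q_ge0); split => //= -[u v] [/= Bu Bv]; rewrite -!gE.
  apply: rV_norm_le => [|i]; first by rewrite mulr_ge0.
  by rewrite chord_step_diff near_diag_step ?B_le.
have B_closed : closed B by apply: closed_closed_ball_.
have [p Bp pE] := banach_fixed_point g_contraction B_closed (ex_intro _ a Ba).
by exists p; [exact: B_half | apply: chord_step_fixed; rewrite gE].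
Qed.

Lemma near_diag_local_bijection : exists U : set 'rV[R]_n,
  [/\ open U, U a, U `<=` ball a d,
      (forall x y, U x -> U y -> F x = F y -> x = y) & open (F @` U)].
Proof.
have eps_gt0 : 0 < eps by rewrite /eps !mulr_gt0 //; move: q_lt1; lra.
pose U := ball a d `&` F @^-1` ball (F a) eps.
exists U; split.
- have ball_ad_open : open (ball a d) by exact: ball_open.
  have [cont_open _] := continuous_inP F ball_ad_open.
  apply: cont_open; last exact: ball_open.
  by move=> x; rewrite inE; apply: near_diag_continuous.
- by split; apply: ballxx.
- by move=> x [].
- by move=> x y [/ball_le xa _] [/ball_le ya _]; apply: near_diag_inj.
suff -> : F @` U = ball (F a) eps by apply: ball_open.
apply/seteqP; split => [_ [x [_ Fx] <-] // | y Fay].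
have := Fay; rewrite -ball_normE /= => /near_diag_image_ball [x xa Fxy].
have x_ball : ball a d x.
  by rewrite -ball_normE /= distrC; apply: le_lt_trans xa _; move: d_gt0; lra.
by exists x => //; split; rewrite //= Fxy.
Qed.

End NearDiagonalInverse.

Lemma derive1_linearization {R : realType} {f : R -> R} {c k : R} : 0 < k ->
  (\forall t \near c, derivable f t 1) -> {for c, continuous (derive1 f)} ->
  exists2 r, 0 < r & forall u v, `|u - c| <= r -> `|v - c| <= r ->
    `|f u - f v - derive1 f c * (u - v)| <= k * `|u - v|.
Proof.
move=> k_gt0 f_der f'_cont.
have : \forall t \near c, derivable f t 1 /\ `|derive1 f c - derive1 f t| < k.
  by near=> t; split; near: t; [exact: f_der | exact: cvgr_dist_lt].
case/nbhs_ballP => r /= r_gt0 near_c.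
exists (r / 2) => [|u v]; first by rewrite divr_gt0.
wlog uv : u v / u <= v => [wlog_uv uc vc|].
  have [uv|vu] := leP u v; first exact: wlog_uv.
  have -> : f u - f v - derive1 f c * (u - v) = - (f v - f u - derive1 f c * (v - u)).
    by ring.
  by rewrite normrN [`|u - v|]distrC; apply: wlog_uv => //; apply: ltW.
move=> uc vc.
have seg_near t : t \in `[u, v] -> derivable f t 1 /\ `|derive1 f c - derive1 f t| < k.
  rewrite in_itv /= => /andP[ut tv]; apply: near_c; rewrite -ball_normE /=.
  move: uc vc; rewrite ltr_norml !ler_norml => /andP[? ?] /andP[? ?].
  by apply/andP; split; lra.
have [xi xi_uv MVT] : exists2 xi, xi \in `[u, v] & f v - f u = derive1 f xi * (v - u).
  apply: MVT_segment => // [t /subset_itv_oo_cc t_uv|].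
    by rewrite derive1E; apply/derivableP; case: (seg_near t t_uv).
  by apply: derivable_within_continuous => t /seg_near[].
have -> : f u - f v - derive1 f c * (u - v) = (derive1 f c - derive1 f xi) * (v - u).
  by rewrite mulrBl -MVT; ring.
rewrite normrM [`|v - u|]distrC ler_wpM2r // ltW //.
by case: (seg_near xi xi_uv).
Unshelve. all: by end_near. Qed.

Definition psiF_jac_diag {R : realType} (e1 e2 : R) (N K : nat) (i : 'I_(N.*2.+1)) :=
  if (N - K < i < N + K)%N then e1 + 2 * e2 else e1 + 4 * e2.

Section QuasicontinuumRows.
Context {R : realType} {eta : R -> R} {a0 e1 e2 k d q : R} {N K : nat}.
Hypotheses (e2_le0 : e2 <= 0) (k_ge0 : 0 <= k).
Hypothesis eta_lin_a0 : forall {u v}, `|u - a0| <= d -> `|v - a0| <= d ->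
  `|eta u - eta v - e1 * (u - v)| <= k * `|u - v|.
Hypothesis eta_lin_2a0 : forall {u v}, `|u - 2 * a0| <= 2 * d -> `|v - 2 * a0| <= 2 * d ->
  `|eta u - eta v - e2 * (u - v)| <= k * `|u - v|.
Hypotheses (q_atomistic : 13 * k - 6 * e2 <= q * (e1 + 2 * e2))
  (q_continuum : 5 * k <= q * (e1 + 4 * e2)).
Variables x y : 'rV[R]_(N.*2.+1).
Hypotheses (x_near : `|x - const_mx a0| <= d) (y_near : `|y - const_mx a0| <= d).

(* [psiF] reads entries through [inord], so the bounds below hold for every [j : nat]. *)
Local Notation X j := (x 0 (inord j)).
Local Notation Y j := (y 0 (inord j)).
Local Notation D := `|x - y|.

Let entry_near_a0 {z : 'rV[R]_(N.*2.+1)} :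
  `|z - const_mx a0| <= d -> forall j, `|z 0 j - a0| <= d.
Proof.
move=> z_near j; apply: le_trans z_near.
by have := rV_entry_norm_le (z - const_mx a0) j; rewrite !mxE.
Qed.

Let entry_dist_le j : `|X j - Y j| <= D.
Proof. by have := rV_entry_norm_le (x - y) (inord j); rewrite !mxE. Qed.

Let e2_entry_incr j : `|e2 * (X j - Y j)| <= - e2 * D.
Proof. by rewrite normrM ler0_norm // ler_wpM2l ?oppr_ge0 ?entry_dist_le. Qed.

Lemma eta_incr_single j : `|eta (X j) - eta (Y j) - e1 * (X j - Y j)| <= k * D.
Proof.
apply: le_trans (eta_lin_a0 _ _) (ler_wpM2l k_ge0 (entry_dist_le j)).
  exact: entry_near_a0.
exact: entry_near_a0.
Qed.

Lemma eta_incr_pair j l :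
  `|eta (X j + X l) - eta (Y j + Y l) - e2 * ((X j - Y j) + (X l - Y l))|
    <= 2 * k * D.
Proof.
have sum_near (z : 'rV[R]_(N.*2.+1)) : `|z - const_mx a0| <= d ->
    `|z 0 (inord j) + z 0 (inord l) - 2 * a0| <= 2 * d.
  move=> z_near; have := entry_near_a0 z_near (inord j).
  have := entry_near_a0 z_near (inord l); rewrite !ler_norml.
  by move=> /andP[? ?] /andP[? ?]; apply/andP; split; lra.
have -> : (X j - Y j) + (X l - Y l) = (X j + X l) - (Y j + Y l) by ring.
apply: le_trans (eta_lin_2a0 (sum_near _ x_near) (sum_near _ y_near)) _.
rewrite [2 * k]mulrC -mulrA ler_wpM2l //.
have -> : (X j + X l) - (Y j + Y l) = (X j - Y j) + (X l - Y l) by ring.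
have := ler_normD (X j - Y j) (X l - Y l).
by have := entry_dist_le j; have := entry_dist_le l; lra.
Qed.

Lemma eta_incr_double j :
  `|eta (2 * X j) - eta (2 * Y j) - e2 * (2 * (X j - Y j))| <= 2 * k * D.
Proof.
have two_mul (t : R) : 2 * t = t + t by ring.
by rewrite (two_mul (X j)) (two_mul (Y j)) (two_mul (X j - Y j)) eta_incr_pair.
Qed.

Lemma psiF_atomistic_row {i : 'I_(N.*2.+1)} : (N - K < i < N + K)%N ->
  `|(e1 + 2 * e2) * (x 0 i - y 0 i) - (psiF eta K x 0 i - psiF eta K y 0 i)|
    <= (13 * k - 6 * e2) * D.
Proof.
move=> i_atom; rewrite /psiF !mxE i_atom.
have -> : x 0 i = X i by rewrite inord_val.
have -> : y 0 i = Y i by rewrite inord_val.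
have /ler_normlP[? ?] := eta_incr_single i.
have /ler_normlP[? ?] := eta_incr_pair i i.-1.
have /ler_normlP[? ?] := eta_incr_pair i i.+1.
have /ler_normlP[? ?] := eta_incr_double (N + K).
have /ler_normlP[? ?] := eta_incr_pair (N + K) (N + K).-1.
have /ler_normlP[? ?] := eta_incr_pair (N + K) (N + K).+1.
have /ler_normlP[? ?] := e2_entry_incr i.-1.
have /ler_normlP[? ?] := e2_entry_incr i.+1.
have /ler_normlP[? ?] := e2_entry_incr (N + K).
have /ler_normlP[? ?] := e2_entry_incr (N + K).-1.
have /ler_normlP[? ?] := e2_entry_incr (N + K).+1.
by apply/ler_normlP; split; lra.
Qed.

Lemma psiF_continuum_row {i : 'I_(N.*2.+1)} : ~~ (N - K < i < N + K)%N ->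
  `|(e1 + 4 * e2) * (x 0 i - y 0 i) - (psiF eta K x 0 i - psiF eta K y 0 i)|
    <= 5 * k * D.
Proof.
move=> /negPf i_cont; rewrite /psiF !mxE i_cont.
have -> : x 0 i = X i by rewrite inord_val.
have -> : y 0 i = Y i by rewrite inord_val.
have /ler_normlP[? ?] := eta_incr_single i.
have /ler_normlP[? ?] := eta_incr_double i.
by apply/ler_normlP; split; lra.
Qed.

Lemma psiF_near_diag i :
  `|psiF_jac_diag e1 e2 N K i * (x 0 i - y 0 i) - (psiF eta K x 0 i - psiF eta K y 0 i)|
    <= q * psiF_jac_diag e1 e2 N K i * D.
Proof.
rewrite /psiF_jac_diag; case: ifP => [atom | /negbT cont].
  by apply: le_trans (psiF_atomistic_row atom) _; rewrite ler_wpM2r.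
by apply: le_trans (psiF_continuum_row cont) _; rewrite ler_wpM2r.
Qed.

End QuasicontinuumRows.

Lemma dominance_margin {R : realFieldType} {e1 e2 : R} :
  e2 <= 0 -> 0 < e1 + 8 * e2 ->
  exists k q, [/\ 0 < k, 0 <= q, q < 1,
    13 * k - 6 * e2 <= q * (e1 + 2 * e2) & 5 * k <= q * (e1 + 4 * e2)].
Proof.
move=> e2_le0 dominant.
(* This k makes 13 k - 6 e2 < e1 + 2 e2 (so q < 1) and 10 k <= e1 + 4 e2. *)
pose k := (e1 + 8 * e2) / 26.
pose q := (13 * k - 6 * e2) / (e1 + 2 * e2).
have e1_2e2_gt0 : 0 < e1 + 2 * e2 by lra.
have q_half : 1 / 2 <= q by rewrite /q ler_pdivlMr // /k; lra.
exists k, q; split.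
- by rewrite /k; lra.
- by move: q_half; lra.
- by rewrite /q ltr_pdivrMr // mul1r /k; lra.
- by rewrite /q divfK ?gt_eqF.
have : 0 <= (q - 1 / 2) * (e1 + 4 * e2) by rewrite mulr_ge0 ?subr_ge0 //; lra.
by rewrite /k; lra.
Qed.

Lemma psiF_local_bijection {R : realType} {eta : R -> R} {a0 : R} (N K : nat) :
  0 < a0 ->
  (\forall t \near a0, derivable eta t 1) ->
  (\forall t \near 2 * a0, derivable eta t 1) ->
  {for a0, continuous (derive1 eta)} -> {for 2 * a0, continuous (derive1 eta)} ->
  derive1 eta (2 * a0) <= 0 -> 0 < derive1 eta a0 + 8 * derive1 eta (2 * a0) ->
  exists U : set 'rV[R]_(N.*2.+1),
    [/\ open U, U (const_mx a0), U `<=` [set r | forall i, 0 < r 0 i],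
        (forall x y, U x -> U y -> psiF eta K x = psiF eta K y -> x = y)
      & open (psiF eta K @` U)].
Proof.
move=> a0_gt0 der_a0 der_2a0 cont_a0 cont_2a0.
set e1 := derive1 eta a0; set e2 := derive1 eta (2 * a0) => e2_le0 dominant.
have [k [q [k_gt0 q_ge0 q_lt1 q_atomistic q_continuum]]] :=
  dominance_margin e2_le0 dominant.
have lmin_gt0 : 0 < e1 + 4 * e2 by lra.
have lmin_le_lmax : e1 + 4 * e2 <= e1 + 2 * e2 by lra.
have [rA rA_gt0 lin_a0] := derive1_linearization k_gt0 der_a0 cont_a0.
have [rB rB_gt0 lin_2a0] := derive1_linearization k_gt0 der_2a0 cont_2a0.
pose d := Num.min rA (Num.min (rB / 2) a0).
have d_gt0 : 0 < d by rewrite !lt_min rA_gt0 a0_gt0 divr_gt0.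
have d_rA : d <= rA by rewrite ge_min lexx.
have d_rB : 2 * d <= rB by rewrite mulrC -ler_pdivlMr // !ge_min lexx orbT.
have d_a0 : d <= a0 by rewrite !ge_min lexx !orbT.
have eta_lin_a0 u v : `|u - a0| <= d -> `|v - a0| <= d ->
    `|eta u - eta v - e1 * (u - v)| <= k * `|u - v|.
  by move=> ud vd; apply: lin_a0; apply: le_trans d_rA.
have eta_lin_2a0 u v : `|u - 2 * a0| <= 2 * d -> `|v - 2 * a0| <= 2 * d ->
    `|eta u - eta v - e2 * (u - v)| <= k * `|u - v|.
  by move=> ud vd; apply: lin_2a0; apply: le_trans d_rB.
have diag_bounds i : e1 + 4 * e2 <= psiF_jac_diag e1 e2 N K i <= e1 + 2 * e2.
  by rewrite /psiF_jac_diag; case: ifP; rewrite lexx ?lmin_le_lmax.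
have [U [U_open Ua U_ball U_inj U_image]] := near_diag_local_bijection d_gt0 q_ge0 q_lt1
  lmin_gt0 lmin_le_lmax diag_bounds
  (psiF_near_diag e2_le0 (ltW k_gt0) eta_lin_a0 eta_lin_2a0 q_atomistic q_continuum).
exists U; split => // x /U_ball x_ball i.
have := x_ball; rewrite -ball_normE /= => /(le_lt_trans (rV_entry_norm_le _ i)).
by rewrite !mxE ltr_norml => /andP[_]; lra.
Qed.

Theorem lemma4p1 (R : realType) (phi : R -> R) (a0 r1 r2 a1 : R) (N K : nat) :
  C3_pos phi ->
  0 < a0 -> a0 < r1 -> r1 < r2 -> r2 < 2 * a0 -> a0 < a1 ->
  (forall r, 0 < r < r1 -> 0 < derive1 (derive1 phi) r) ->
  (forall r, r1 < r -> derive1 (derive1 phi) r < 0) ->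
  (forall r, 0 < r < r2 -> derive1 (derive1 (derive1 phi)) r < 0) ->
  (forall r, r2 < r -> 0 < derive1 (derive1 (derive1 phi)) r) ->
  (forall r, 0 < r < a0 -> hat_eta (derive1 phi) r < 0) ->
  (forall r, a0 < r -> 0 < hat_eta (derive1 phi) r) ->
  (forall r, 0 < r < a1 -> 0 < derive1 (hat_eta (derive1 phi)) r) ->
  (forall r, a1 < r -> derive1 (hat_eta (derive1 phi)) r < 0) ->
  (0 < N)%N -> (0 < K)%N -> (K < N.-1)%N ->
  0 < derive1 (derive1 phi) a0 + 8 * derive1 (derive1 phi) (2 * a0) ->
  exists U : set 'rV[R]_(N.*2.+1),
    [/\ open U, U (const_mx a0),
        U `<=` [set r : 'rV[R]_(N.*2.+1) | forall i, 0 < r 0 i],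
        (forall x y, U x -> U y -> psiF (derive1 phi) K x = psiF (derive1 phi) K y -> x = y)
      & open (psiF (derive1 phi) K @` U)].
Proof.
move=> C3 a0_gt0 _ r1_r2 r2_2a0 _ _ eta'_neg _ _ _ _ _ _ _ _ _ dominant.
have near_der (t : R) : 0 < t -> \forall s \near t, derivable (derive1 phi) s 1.
  move=> t_gt0; near=> s; have /C3[] // : 0 < s by near: s; exact: lt_nbhsr.
have eta'_cont (t : R) : 0 < t -> {for t, continuous (derive1 (derive1 phi))}.
  move=> /C3[_ _ eta''_der _]; apply: differentiable_continuous.
  by rewrite -derivable1_diffP.
have two_a0_gt0 : 0 < 2 * a0 by rewrite mulr_gt0.
have eta'_2a0_le0 : derive1 (derive1 phi) (2 * a0) <= 0.
  by apply/ltW/eta'_neg; lra.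
exact: psiF_local_bijection N K a0_gt0 (near_der _ a0_gt0) (near_der _ two_a0_gt0)
  (eta'_cont _ a0_gt0) (eta'_cont _ two_a0_gt0) eta'_2a0_le0 dominant.
Unshelve. all: by end_near. Qed.
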